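(* Let $\mu>0$ and let $\gamma$ be a curve in $\mathbb M^2(\rho)$ with constant curvature $\kappa$ satisfying $\frac{d^2}{ds^2}(e^{\mu\kappa})+(\kappa^2-\kappa/\mu+\rho)e^{\mu\kappa}=0$. Then: (1) if $\rho=0$ (Euclidean plane $\mathbb R^2$), $\gamma$ is either a geodesic (straight line) or a circle of radius $\mu$; (2) if $\rho>0$ (sphere $\mathbb S^2(\rho)$), then $0<2\sqrt\rho\,\mu\le 1$; if $2\sqrt\rho\,\mu<1$ there are two solutions, corresponding to two parallels (circles), and if $2\sqrt\rho\,\mu=1$ the solution is a circle of curvature $\sqrt\rho$; (3) if $\rho<0$ (hyperbolic plane $\mathbb H^2(\rho)$), $\gamma$ is either a circle or a hypercycle.
   Context: $\mathbb M^2(\rho)$ is the simply connected complete surface of constant curvature $\rho$; $\kappa$ denotes signed geodesic curvature and $s$ arc-length. Standing assumption in the paper: the energy index $\mu$ is positive. *)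

From Stdlib Require Import Reals Lra.
From Coquelicot Require Import Coquelicot.
Open Scope R_scope.

(* A curve gamma in M^2(rho), parametrized by arc length s, is represented
   (up to isometries of M^2(rho), by the fundamental theorem of plane curves
   in space forms) by its signed geodesic curvature function kappa : R -> R. *)

Definition tanh_ (x : R) : R := (exp x - exp (- x)) / (exp x + exp (- x)).

Definition const_curv_solution (rho mu : R) (kappa : R -> R) : Prop :=
  (exists k : R, forall s, kappa s = k) /\
  forall s : R,
    Derive_n (fun t => exp (mu * kappa t)) 2 s
    + (kappa s ^ 2 - kappa s / mu + rho) * exp (mu * kappa s) = 0.

Definition is_geodesic (kappa : R -> R) : Prop := forall s, kappa s = 0.

Definition is_euclid_circle (r : R) (kappa : R -> R) : Prop :=
  0 < r /\ forall s, Rabs (kappa s) = 1 / r.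

(* circle (parallel) in S^2(rho), rho > 0: geodesic circle of radius
   r in (0, pi/sqrt rho), curvature sqrt rho * cot (sqrt rho * r) (signed) *)
Definition is_sphere_parallel (rho : R) (kappa : R -> R) : Prop :=
  exists r : R, 0 < r /\ r < PI / sqrt rho /\
    forall s, kappa s = sqrt rho * cos (sqrt rho * r) / sin (sqrt rho * r).

(* geodesic circle of radius r > 0 in H^2(rho), rho < 0:
   |kappa| = sqrt(-rho) coth(sqrt(-rho) r) *)
Definition is_hyp_circle (rho : R) (kappa : R -> R) : Prop :=
  exists r : R, 0 < r /\
    forall s, Rabs (kappa s) = sqrt (- rho) / tanh_ (sqrt (- rho) * r).

(* hypercycle (equidistant curve at distance d > 0 from a geodesic) in
   H^2(rho): |kappa| = sqrt(-rho) tanh(sqrt(-rho) d) *)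
Definition is_hypercycle (rho : R) (kappa : R -> R) : Prop :=
  exists d : R, 0 < d /\
    forall s, Rabs (kappa s) = sqrt (- rho) * tanh_ (sqrt (- rho) * d).

(* For a constant curvature k the second-derivative term vanishes and
   e^{mu k} > 0, so the equation reduces to mu k^2 - k + mu rho = 0, that is
   (2 mu k - 1)^2 = 1 - 4 mu^2 rho.  In R^2 the roots are 0 and 1/mu.  In S^2
   real roots exist iff 4 mu^2 rho <= 1, and every constant curvature is that
   of a parallel.  In H^2 a root can be neither 0 nor +-sqrt(-rho), so |k| lies
   either above sqrt(-rho) (|k| = sqrt(-rho) coth, a geodesic circle) or
   strictly between 0 and sqrt(-rho) (|k| = sqrt(-rho) tanh, a hypercycle). *)

From Stdlib Require Import Reals Lra.
From Coquelicot Require Import Coquelicot.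
Open Scope R_scope.

Lemma tanh_half_ln (y : R) : 0 < y -> tanh_ (ln y / 2) = (y - 1) / (y + 1).
Proof.
  intros hy. unfold tanh_. rewrite exp_Ropp.
  assert (Hsq : exp (ln y / 2) * exp (ln y / 2) = y).
  { rewrite <- exp_plus. replace (ln y / 2 + ln y / 2) with (ln y) by field.
    now apply exp_ln. }
  assert (Hpos := exp_pos (ln y / 2)).
  set (E := exp (ln y / 2)) in *. rewrite <- Hsq. field. split; nra.
Qed.

Lemma tanh_onto (t : R) : 0 < t < 1 -> exists x, 0 < x /\ tanh_ x = t.
Proof.
  intros ht.
  assert (Hgt1 : 1 < (1 + t) / (1 - t)).
  { apply (Rmult_lt_reg_r (1 - t)); [lra|]. field_simplify; lra. }
  exists (ln ((1 + t) / (1 - t)) / 2). split.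
  - apply Rdiv_lt_0_compat; [|lra].
    rewrite <- ln_1. apply ln_increasing; lra.
  - rewrite tanh_half_ln by lra. field. lra.
Qed.

Lemma cot_onto (c : R) : exists th, 0 < th < PI /\ cos th / sin th = c.
Proof.
  destruct (atan_bound c) as [hlo hhi].
  exists (PI / 2 - atan c). split; [lra|].
  rewrite cos_shift, sin_shift. exact (tan_atan c).
Qed.

Lemma is_euclid_circle_const (r : R) (kappa : R -> R) :
  0 < r -> (forall s, kappa s = 1 / r) -> is_euclid_circle r kappa.
Proof.
  intros hr Hk. split; [exact hr|]. intros s. rewrite Hk.
  apply Rabs_pos_eq. unfold Rdiv. rewrite Rmult_1_l.
  left; now apply Rinv_0_lt_compat.
Qed.

Lemma is_sphere_parallel_const (rho k : R) (kappa : R -> R) :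
  0 < rho -> (forall s, kappa s = k) -> is_sphere_parallel rho kappa.
Proof.
  intros hrho Hk. assert (Hq := sqrt_lt_R0 rho hrho).
  destruct (cot_onto (k / sqrt rho)) as [th [[h0 hpi] Hcot]].
  assert (Hsin := sin_gt_0 th h0 hpi).
  exists (th / sqrt rho). repeat split.
  - now apply Rdiv_lt_0_compat.
  - apply Rmult_lt_compat_r; [now apply Rinv_0_lt_compat | exact hpi].
  - intros s. rewrite Hk.
    replace (sqrt rho * (th / sqrt rho)) with th by (field; lra).
    unfold Rdiv in *. rewrite Rmult_assoc, Hcot. field. lra.
Qed.

Lemma is_hyp_circle_const (rho k : R) (kappa : R -> R) :
  rho < 0 -> sqrt (- rho) < Rabs k -> (forall s, kappa s = k) ->
  is_hyp_circle rho kappa.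
Proof.
  intros hrho Hgt Hk. assert (Ha := sqrt_lt_R0 (- rho) ltac:(lra)).
  destruct (tanh_onto (sqrt (- rho) / Rabs k)) as [x [hx Hx]].
  { split; [apply Rdiv_lt_0_compat; lra|].
    apply (Rmult_lt_reg_r (Rabs k)); [lra|]. field_simplify; lra. }
  exists (x / sqrt (- rho)). split; [now apply Rdiv_lt_0_compat|].
  intros s. rewrite Hk.
  replace (sqrt (- rho) * (x / sqrt (- rho))) with x by (field; lra).
  rewrite Hx. field. lra.
Qed.

Lemma is_hypercycle_const (rho k : R) (kappa : R -> R) :
  rho < 0 -> 0 < Rabs k < sqrt (- rho) -> (forall s, kappa s = k) ->
  is_hypercycle rho kappa.
Proof.
  intros hrho Hlt Hk. assert (Ha := sqrt_lt_R0 (- rho) ltac:(lra)).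
  destruct (tanh_onto (Rabs k / sqrt (- rho))) as [x [hx Hx]].
  { split; [apply Rdiv_lt_0_compat; lra|].
    apply (Rmult_lt_reg_r (sqrt (- rho))); [lra|]. field_simplify; lra. }
  exists (x / sqrt (- rho)). split; [now apply Rdiv_lt_0_compat|].
  intros s. rewrite Hk.
  replace (sqrt (- rho) * (x / sqrt (- rho))) with x by (field; lra).
  rewrite Hx. field. lra.
Qed.

Lemma const_curv_solution_const (rho mu k : R) (kappa : R -> R) :
  mu <> 0 -> (forall s, kappa s = k) ->
  const_curv_solution rho mu kappa <-> mu * k ^ 2 - k + mu * rho = 0.
Proof.
  intros hmu Hk.
  assert (Hode : forall s,
    Derive_n (fun t => exp (mu * kappa t)) 2 s
    + (kappa s ^ 2 - kappa s / mu + rho) * exp (mu * kappa s)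
    = (mu * k ^ 2 - k + mu * rho) * (exp (mu * k) / mu)).
  { intros s.
    rewrite (Derive_n_ext _ (fun _ => exp (mu * k))) by (intro; now rewrite Hk).
    rewrite Derive_n_const, Hk. field. exact hmu. }
  assert (Hfactor : exp (mu * k) / mu <> 0).
  { apply Rmult_integral_contrapositive.
    split; [apply Rgt_not_eq, exp_pos | now apply Rinv_neq_0_compat]. }
  unfold const_curv_solution. split.
  - intros [_ Hs]. specialize (Hs 0). rewrite Hode in Hs.
    destruct (Rmult_integral _ _ Hs); [assumption | contradiction].
  - intros Hq. split; [now exists k|].
    intros s. rewrite Hode, Hq. ring.
Qed.

Lemma const_curv_solution_inv (rho mu : R) (kappa : R -> R) :
  mu <> 0 -> const_curv_solution rho mu kappa ->
  exists k, (forall s, kappa s = k) /\ mu * k ^ 2 - k + mu * rho = 0.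
Proof.
  intros hmu Hsol. destruct (proj1 Hsol) as [k Hk].
  exists k. split; [exact Hk|].
  now apply (const_curv_solution_const rho mu k kappa hmu Hk).
Qed.

Lemma curvature_eq_square (rho mu k : R) :
  mu <> 0 ->
  mu * k ^ 2 - k + mu * rho = 0 <-> (2 * mu * k - 1) ^ 2 = 1 - 4 * mu ^ 2 * rho.
Proof.
  intros hmu.
  assert (Hid : (2 * mu * k - 1) ^ 2 - (1 - 4 * mu ^ 2 * rho)
                = (4 * mu) * (mu * k ^ 2 - k + mu * rho)) by ring.
  split; intros H.
  - apply Rminus_diag_uniq. rewrite Hid, H. ring.
  - apply Rminus_diag_eq in H. rewrite Hid in H.
    destruct (Rmult_integral _ _ H); [lra | assumption].
Qed.

Lemma curvature_eq_roots (rho mu k : R) :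
  mu <> 0 -> 0 <= 1 - 4 * mu ^ 2 * rho ->
  mu * k ^ 2 - k + mu * rho = 0 <->
  k = (1 + sqrt (1 - 4 * mu ^ 2 * rho)) / (2 * mu) \/
  k = (1 - sqrt (1 - 4 * mu ^ 2 * rho)) / (2 * mu).
Proof.
  intros hmu hD. rewrite curvature_eq_square by exact hmu.
  set (d := sqrt (1 - 4 * mu ^ 2 * rho)).
  assert (Hd : d ^ 2 = 1 - 4 * mu ^ 2 * rho) by now apply pow2_sqrt.
  rewrite <- Hd. split.
  - intros H. destruct (Rsqr_eq (2 * mu * k - 1) d) as [Hp | Hm].
    + now rewrite !Rsqr_pow2.
    + left. apply (Rmult_eq_reg_l (2 * mu)); [field_simplify|]; lra.
    + right. apply (Rmult_eq_reg_l (2 * mu)); [field_simplify|]; lra.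
  - intros [-> | ->]; field; exact hmu.
Qed.

Lemma sphere_discriminant (rho mu : R) :
  0 <= rho -> 1 - 4 * mu ^ 2 * rho = (1 - 2 * sqrt rho * mu) * (1 + 2 * sqrt rho * mu).
Proof.
  intros hrho. rewrite <- (sqrt_sqrt rho hrho) at 1. ring.
Qed.

Lemma euclid_classification (mu : R) (kappa : R -> R) :
  0 < mu -> const_curv_solution 0 mu kappa ->
  is_geodesic kappa \/ is_euclid_circle mu kappa.
Proof.
  intros hmu Hsol.
  destruct (const_curv_solution_inv 0 mu kappa ltac:(lra) Hsol) as [k [Hk Hq]].
  assert (Hfactor : k * (mu * k - 1) = 0) by (rewrite <- Hq; ring).
  destruct (Rmult_integral _ _ Hfactor) as [H0 | H1].
  - left. intros s. now rewrite Hk.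
  - right. apply is_euclid_circle_const; [exact hmu|].
    intros s. rewrite Hk. field_simplify_eq; lra.
Qed.

Lemma sphere_solution_bound (rho mu : R) (kappa : R -> R) :
  0 < rho -> 0 < mu -> const_curv_solution rho mu kappa ->
  0 < 2 * sqrt rho * mu <= 1.
Proof.
  intros hrho hmu Hsol. assert (hmu0 : mu <> 0) by lra.
  assert (Hq := sqrt_lt_R0 rho hrho).
  destruct (const_curv_solution_inv rho mu kappa hmu0 Hsol) as [k [_ Hk]].
  apply curvature_eq_square in Hk; [|exact hmu0].
  rewrite sphere_discriminant in Hk by lra.
  assert (0 <= (2 * mu * k - 1) ^ 2) by apply pow2_ge_0.
  split; nra.
Qed.

Lemma sphere_two_parallels (rho mu : R) :
  0 < rho -> 0 < mu -> 2 * sqrt rho * mu < 1 ->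
  exists k1 k2 : R, k1 <> k2 /\
    const_curv_solution rho mu (fun _ => k1) /\
    const_curv_solution rho mu (fun _ => k2) /\
    is_sphere_parallel rho (fun _ => k1) /\
    is_sphere_parallel rho (fun _ => k2) /\
    forall kappa : R -> R, const_curv_solution rho mu kappa ->
      (forall s, kappa s = k1) \/ (forall s, kappa s = k2).
Proof.
  intros hrho hmu hlt. assert (hmu0 : mu <> 0) by lra.
  assert (Hq := sqrt_lt_R0 rho hrho).
  assert (hD : 0 < 1 - 4 * mu ^ 2 * rho).
  { rewrite sphere_discriminant by lra. apply Rmult_lt_0_compat; nra. }
  assert (Hd := sqrt_lt_R0 _ hD).
  set (d := sqrt (1 - 4 * mu ^ 2 * rho)) in *.
  assert (Hroots := fun k => curvature_eq_roots rho mu k hmu0 ltac:(lra)).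
  fold d in Hroots.
  exists ((1 + d) / (2 * mu)), ((1 - d) / (2 * mu)).
  split; [|split; [|split; [|split; [|split]]]].
  - intros H. apply (Rmult_eq_compat_r (2 * mu)) in H.
    unfold Rdiv in H. rewrite !Rmult_assoc, Rinv_l, !Rmult_1_r in H; lra.
  - apply (const_curv_solution_const rho mu _ _ hmu0 (fun _ => eq_refl)).
    apply Hroots. now left.
  - apply (const_curv_solution_const rho mu _ _ hmu0 (fun _ => eq_refl)).
    apply Hroots. now right.
  - now apply (is_sphere_parallel_const _ ((1 + d) / (2 * mu))).
  - now apply (is_sphere_parallel_const _ ((1 - d) / (2 * mu))).
  - intros kappa Hsol.
    destruct (const_curv_solution_inv rho mu kappa hmu0 Hsol) as [k [Hk Hkq]].
    apply Hroots in Hkq as [-> | ->]; [left | right]; exact Hk.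
Qed.

Lemma sphere_double_root (rho mu : R) :
  0 < rho -> 0 < mu -> 2 * sqrt rho * mu = 1 ->
  const_curv_solution rho mu (fun _ => sqrt rho) /\
  forall kappa : R -> R, const_curv_solution rho mu kappa ->
    forall s, kappa s = sqrt rho.
Proof.
  intros hrho hmu heq. assert (hmu0 : mu <> 0) by lra.
  assert (hD : 1 - 4 * mu ^ 2 * rho = 0)
    by (rewrite sphere_discriminant, heq by lra; ring).
  assert (Hroot : forall k, mu * k ^ 2 - k + mu * rho = 0 <-> k = sqrt rho).
  { intros k. rewrite curvature_eq_roots, hD, sqrt_0 by lra.
    replace ((1 + 0) / (2 * mu)) with (sqrt rho) by (field_simplify_eq; lra).
    replace ((1 - 0) / (2 * mu)) with (sqrt rho) by (field_simplify_eq; lra).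
    tauto. }
  split.
  - apply (const_curv_solution_const rho mu _ _ hmu0 (fun _ => eq_refl)).
    now apply Hroot.
  - intros kappa Hsol s.
    destruct (const_curv_solution_inv rho mu kappa hmu0 Hsol) as [k [Hk Hkq]].
    rewrite Hk. now apply Hroot.
Qed.

Lemma hyperbolic_classification (rho mu : R) (kappa : R -> R) :
  rho < 0 -> mu <> 0 -> const_curv_solution rho mu kappa ->
  is_hyp_circle rho kappa \/ is_hypercycle rho kappa.
Proof.
  intros hrho hmu Hsol.
  destruct (const_curv_solution_inv rho mu kappa hmu Hsol) as [k [Hk Hq]].
  assert (Ha := sqrt_lt_R0 (- rho) ltac:(lra)).
  assert (Hk0 : 0 < Rabs k).
  { apply Rabs_pos_lt. intros ->. apply hmu. nra. }
  assert (Hka : Rabs k <> sqrt (- rho)).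
  { intros Habs. assert (Hsq : k ^ 2 = - rho).
    { rewrite <- pow2_abs, Habs. apply pow2_sqrt. lra. }
    rewrite Hsq in Hq. replace k with 0 in Hk0 by lra.
    rewrite Rabs_R0 in Hk0. lra. }
  destruct (Rtotal_order (Rabs k) (sqrt (- rho))) as [Hlt | [Heq | Hgt]].
  - right. now apply (is_hypercycle_const _ k).
  - contradiction.
  - left. now apply (is_hyp_circle_const _ k).
Qed.

Theorem proposition2p4 (rho mu : R) (hmu : 0 < mu) :
  (* (1) Euclidean plane *)
  (rho = 0 -> forall kappa : R -> R, const_curv_solution rho mu kappa ->
     is_geodesic kappa \/ is_euclid_circle mu kappa) /\
  (* (2) sphere *)
  (0 < rho ->
     ((exists kappa : R -> R, const_curv_solution rho mu kappa) ->
        0 < 2 * sqrt rho * mu <= 1) /\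
     (2 * sqrt rho * mu < 1 ->
        exists k1 k2 : R, k1 <> k2 /\
          const_curv_solution rho mu (fun _ => k1) /\
          const_curv_solution rho mu (fun _ => k2) /\
          is_sphere_parallel rho (fun _ => k1) /\
          is_sphere_parallel rho (fun _ => k2) /\
          forall kappa : R -> R, const_curv_solution rho mu kappa ->
            (forall s, kappa s = k1) \/ (forall s, kappa s = k2)) /\
     (2 * sqrt rho * mu = 1 ->
        const_curv_solution rho mu (fun _ => sqrt rho) /\
        forall kappa : R -> R, const_curv_solution rho mu kappa ->
          forall s, kappa s = sqrt rho)) /\
  (* (3) hyperbolic plane *)
  (rho < 0 -> forall kappa : R -> R, const_curv_solution rho mu kappa ->
     is_hyp_circle rho kappa \/ is_hypercycle rho kappa).
Proof.
  split; [|split].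
  - intros ->. intros kappa. now apply euclid_classification.
  - intros hrho. split; [|split].
    + intros [kappa Hsol]. now apply (sphere_solution_bound _ _ kappa).
    + now apply sphere_two_parallels.
    + now apply sphere_double_root.
  - intros hrho kappa. apply hyperbolic_classification; lra.
Qed.
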